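(* Let $U$ be a unitary on $\mathcal H=\mathcal H_A\otimes\mathcal H_V$ with an orthonormal eigenbasis $|\phi_i\rangle$, $U|\phi_i\rangle=\lambda_i|\phi_i\rangle$. For every unit vector $|\beta_0\rangle=\sum_ia_i|\phi_i\rangle$ and every positive integer $T$, \[\|\bar P_T(\cdot|\beta_0)-\pi(\cdot|\beta_0)\|\le 2\sum_{i,j:\ \lambda_i\ne\lambda_j}\frac{|a_i|^2}{T\,|\lambda_i-\lambda_j|}.\]
   Context: $\mathcal H_V$ has orthonormal basis $\{|v\rangle:v\in V\}$ ($V$ finite), $\mathcal H_A$ has basis $|1\rangle,\dots,|d\rangle$. $P_t(v|\beta_0)=\sum_a|\langle a,v|U^t\beta_0\rangle|^2$, $\bar P_T(v|\beta_0)=\frac1T\sum_{t=0}^{T-1}P_t(v|\beta_0)$, $\pi(v|\beta_0)=\lim_{T\to\infty}\bar P_T(v|\beta_0)$. Total variation distance $\|d_1-d_2\|=\sum_{v\in V}|d_1(v)-d_2(v)|$. *)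

From HB Require Import structures.
From mathcomp Require Import all_boot all_order all_algebra.
From mathcomp Require Import all_classical all_reals all_analysis.
From mathcomp Require Import complex.
Set Implicit Arguments. Unset Strict Implicit. Unset Printing Implicit Defensive.
Import Order.TTheory GRing.Theory Num.Theory numFieldNormedType.Exports.
Local Open Scope ring_scope.
Local Open Scope classical_set_scope.

Definition cmod (R : realType) (z : R[i]) : R := Num.sqrt (complex.Re z ^+ 2 + complex.Im z ^+ 2).

Section QW.
Variables (R : realType) (d : nat) (V : finType).
(* basis index of H = H_A (x) H_V : pairs (a, v), a : 'I_d, v : V *)
Local Notation S := ('I_d * V)%type.
Local Notation vec := (S -> R[i]).
Local Notation op := (S -> S -> R[i]).

Definition applyOp (U : op) (x : vec) : vec := fun s => \sum_(t : S) U s t * x t.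
Definition iterOp (U : op) (t : nat) (x : vec) : vec := iter t (applyOp U) x.
Definition cdot (x y : vec) : R[i] := \sum_(s : S) (conjc (x s)) * y s.
Definition sqnorm (x : vec) : R := \sum_(s : S) cmod (x s) ^+ 2.
Definition qw_unitary (U : op) : Prop :=
  (forall i j : S, \sum_(k : S) conjc (U k i) * U k j = (i == j)%:R) /\
  (forall i j : S, \sum_(k : S) U i k * conjc (U j k) = (i == j)%:R).
Definition superpos (phi : S -> vec) (a : S -> R[i]) : vec :=
  fun s => \sum_(i : S) a i * phi i s.
Definition Pt (U : op) (beta0 : vec) (t : nat) (v : V) : R :=
  \sum_(a : 'I_d) cmod (iterOp U t beta0 (a, v)) ^+ 2.
Definition Pbar (U : op) (beta0 : vec) (T : nat) (v : V) : R :=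
  T%:R^-1 * \sum_(t < T) Pt U beta0 t v.
Definition Plim (U : op) (beta0 : vec) (v : V) : R :=
  lim ((fun T : nat => Pbar U beta0 T v) @ \oo).
End QW.

Definition tvdist (R : realType) (V : finType) (d1 d2 : V -> R) : R :=
  \sum_(v : V) `|d1 v - d2 v|.

From HB Require Import structures.
From mathcomp Require Import all_boot all_order all_algebra.
From mathcomp Require Import all_classical all_reals all_analysis.
From mathcomp Require Import complex.
From mathcomp Require Import ring lra.
Import Order.TTheory GRing.Theory Num.Theory numFieldNormedType.Exports.
Set Implicit Arguments. Unset Strict Implicit. Unset Printing Implicit Defensive.
Local Open Scope ring_scope.
Local Open Scope complex_scope.

(* Expanding beta_0 in the eigenbasis, P_t(v) = sum_(i,j) c_ij(v) z_ij^t with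
   z_ij = conj(lam_i) lam_j.  Terms with lam_i = lam_j do not depend on t and
   make up pi; for lam_i <> lam_j, z_ij is a unit complex number different from
   1, so its Cesaro mean over t < T is at most 2 / (T |z_ij - 1|)
   = 2 / (T |lam_i - lam_j|).  This shows that the Cesaro means converge and
   bounds the distance to the limit by the oscillating terms.  Summing over v,
   sum_v |c_ij(v)| <= |a_i| |a_j| by orthonormality of the phi_i, and
   |a_i| |a_j| <= (|a_i|^2 + |a_j|^2) / 2 together with the symmetry of the
   double sum in (i, j) gives the bound. *)

Section ComplexModulus.
Variable R : realType.
Implicit Types x y z : R[i].

Lemma cmodE z : (cmod z)%:C = `|z|.
Proof. by rewrite normc_def; case: z. Qed.

Lemma cmod_ge0 z : 0 <= cmod z.
Proof. exact: sqrtr_ge0. Qed.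

Lemma cmod_gt0 z : z != 0 -> 0 < cmod z.
Proof. by move=> nz; rewrite -ltcR cmodE normr_gt0. Qed.

Lemma cmodM x y : cmod (x * y) = cmod x * cmod y.
Proof. by apply: complexI; rewrite rmorphM /= !cmodE normrM. Qed.

Lemma cmodV z : cmod z^-1 = (cmod z)^-1.
Proof. by apply: complexI; rewrite fmorphV /= !cmodE normfV. Qed.

Lemma cmodX z n : cmod (z ^+ n) = cmod z ^+ n.
Proof. by apply: complexI; rewrite rmorphXn /= !cmodE normrX. Qed.

Lemma cmodN z : cmod (- z) = cmod z.
Proof. by apply: complexI; rewrite !cmodE normrN. Qed.

Lemma cmodJ z : cmod (conjc z) = cmod z.
Proof. by case: z => x y; rewrite /cmod /= sqrrN. Qed.

Lemma cmod_nat n : cmod (n%:R : R[i]) = n%:R.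
Proof. by apply: complexI; rewrite rmorph_nat cmodE normr_nat. Qed.

Lemma cmod0 : cmod (0 : R[i]) = 0.
Proof. exact: (cmod_nat 0). Qed.

Lemma cmod1 : cmod (1 : R[i]) = 1.
Proof. exact: (cmod_nat 1). Qed.

Lemma cmodD x y : cmod (x + y) <= cmod x + cmod y.
Proof. by rewrite -lecR rmorphD /= !cmodE ler_normD. Qed.

Lemma cmod_sum (I : Type) (r : seq I) (P : pred I) (F : I -> R[i]) :
  cmod (\sum_(i <- r | P i) F i) <= \sum_(i <- r | P i) cmod (F i).
Proof.
elim/big_ind2: _ => // [|u v p q uv pq]; first by rewrite cmod0.
exact: le_trans (cmodD _ _) (lerD uv pq).
Qed.

Lemma cmod_sqr z : (cmod z ^+ 2)%:C = conjc z * z.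
Proof.
rewrite /cmod sqr_sqrtr ?addr_ge0 ?sqr_ge0 //; case: z => x y /=.
by apply/eqP; rewrite eq_complex /=; apply/andP; split; apply/eqP; ring.
Qed.

Lemma ler_Re_cmod z : `|complex.Re z| <= cmod z.
Proof.
case: z => x y; rewrite /cmod /= -sqrtr_sqr; apply: ler_wsqrtr.
by rewrite lerDl sqr_ge0.
Qed.

Lemma ReD x y : complex.Re (x + y) = complex.Re x + complex.Re y.
Proof. by case: x; case: y. Qed.

End ComplexModulus.

Lemma cmod_mean_geometric_le (R : realType) (z : R[i]) (T : nat) :
  cmod z = 1 -> z != 1 ->
  cmod (T%:R^-1 * \sum_(t < T) z ^+ t) <= 2 / (T%:R * cmod (z - 1)).
Proof.
move=> z1 z_neq1.
have c_gt0 : 0 < cmod (z - 1) by rewrite cmod_gt0 // subr_eq0.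
have geom : cmod (z - 1) * cmod (\sum_(t < T) z ^+ t) <= 2.
  rewrite -cmodM -subrX1; apply: le_trans (cmodD _ _) _.
  by rewrite cmodX z1 expr1n cmodN cmod1; lra.
rewrite cmodM cmodV cmod_nat invfM mulrCA ler_wpM2l ?invr_ge0 ?ler0n //.
by rewrite ler_pdivlMr // mulrC.
Qed.

Lemma cvg_dist_le_divn (R : realType) (f : nat -> R) (l K : R) :
  (forall n, (0 < n)%N -> `|l - f n| <= K / n%:R) -> (f @ \oo --> l)%classic.
Proof.
move=> fK; apply/cvgrPdist_le => e e0; near=> n.
have n_gt0 : (0 < n)%N by near: n; exact: nbhs_infty_gt.
apply: le_trans (fK n n_gt0) _.
rewrite ler_pdivrMr ?ltr0n // -ler_pdivrMl //.
by near: n; exact: nbhs_infty_ger.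
Unshelve. all: by end_near.
Qed.

Lemma ler_sum_sym_mul (R : realFieldType) (I : finType) (P : rel I)
    (b : I -> R) (X : I -> I -> R) :
  (forall i j, P i j = P j i) -> (forall i j, X i j = X j i) ->
  (forall i j, 0 <= X i j) ->
  \sum_i \sum_(j | P i j) b i * b j * X i j
    <= \sum_i \sum_(j | P i j) b i ^+ 2 * X i j.
Proof.
move=> PC XC X_ge0.
have swap : \sum_i \sum_(j | P i j) b j ^+ 2 * X i j
          = \sum_i \sum_(j | P i j) b i ^+ 2 * X i j.
  under eq_bigr do rewrite big_mkcond /=.
  rewrite exchange_big /=; apply: eq_bigr => j _.
  by rewrite [RHS]big_mkcond; apply: eq_bigr => i _; rewrite PC XC.
have -> : \sum_i \sum_(j | P i j) b i ^+ 2 * X i j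
        = \sum_i \sum_(j | P i j) (b i ^+ 2 * X i j + b j ^+ 2 * X i j) / 2.
  transitivity ((\sum_i \sum_(j | P i j) b i ^+ 2 * X i j
                 + \sum_i \sum_(j | P i j) b j ^+ 2 * X i j) / 2).
    by rewrite swap; field.
  rewrite -big_split big_distrl /=; apply: eq_bigr => i _.
  by rewrite -big_split big_distrl.
apply: ler_sum => i _; apply: ler_sum => j _.
have := mulr_ge0 (X_ge0 i j) (sqr_ge0 (b i - b j)); nra.
Qed.

Lemma sum_mul_delta (K : pzSemiRingType) (I : finType) (F : I -> K) (k : I) :
  \sum_l F l * (k == l)%:R = F k.
Proof.
rewrite (bigD1 k) //= eqxx mulr1 big1 ?addr0 // => l /negbTE.
by rewrite eq_sym => ->; rewrite mulr0.
Qed.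

Lemma cdot_unitary (R : realType) (d : nat) (V : finType) (U : _ -> _ -> R[i])
    (x y : ('I_d * V)%type -> R[i]) :
  qw_unitary U -> cdot (applyOp U x) (applyOp U y) = cdot x y.
Proof.
case=> UhU _; rewrite /cdot /applyOp.
under eq_bigr do rewrite rmorph_sum big_distrl /=.
under eq_bigr do under eq_bigr do rewrite big_distrr /=.
rewrite exchange_big /=; under eq_bigr do rewrite exchange_big /=.
transitivity (\sum_k \sum_l conjc (x k) * y l * (k == l)%:R).
  apply: eq_bigr => k _; apply: eq_bigr => l _.
  rewrite -UhU big_distrr /=; apply: eq_bigr => s _; rewrite rmorphM /=; ring.
by apply: eq_bigr => k _; rewrite sum_mul_delta.
Qed.

Section QuantumWalk.
Variables (R : realType) (d : nat) (V : finType).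
Local Notation S := ('I_d * V)%type.
Variables (U phi : S -> S -> R[i]) (lam a : S -> R[i]).
Hypothesis U_unitary : qw_unitary U.
Hypothesis phi_orthonormal : forall i j, cdot (phi i) (phi j) = (i == j)%:R.
Hypothesis phi_eigen : forall i s, applyOp U (phi i) s = lam i * phi i s.

Lemma eigenvalue_conjcM i : conjc (lam i) * lam i = 1.
Proof.
transitivity (conjc (lam i) * lam i * cdot (phi i) (phi i)).
  by rewrite phi_orthonormal eqxx mulr1.
transitivity (cdot (applyOp U (phi i)) (applyOp U (phi i))); last first.
  by rewrite cdot_unitary // phi_orthonormal eqxx.
rewrite /cdot big_distrr.
by apply: eq_bigr => s _; rewrite !phi_eigen rmorphM /=; ring.
Qed.

Lemma cmod_eigenvalue i : cmod (lam i) = 1.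
Proof.
have : cmod (lam i) ^+ 2 = 1 ^+ 2.
  by rewrite expr1n expr2 -{1}(cmodJ (lam i)) -cmodM eigenvalue_conjcM cmod1.
by move/eqP; rewrite eqrXn2 ?cmod_ge0 // => /eqP.
Qed.

Lemma iterOp_superpos t s :
  iterOp U t (superpos phi a) s = \sum_i a i * lam i ^+ t * phi i s.
Proof.
elim: t s => [|t IH] s.
  rewrite /iterOp /superpos /=.
  by apply: eq_bigr => i _; rewrite expr0 mulr1.
transitivity (\sum_k U s k * iterOp U t (superpos phi a) k); first by [].
under eq_bigr do rewrite IH big_distrr.
rewrite exchange_big /=; apply: eq_bigr => i _.
transitivity (a i * lam i ^+ t * applyOp U (phi i) s).
  by rewrite /applyOp big_distrr; apply: eq_bigr => k _ /=; ring.
by rewrite phi_eigen exprS; ring.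
Qed.

Definition overlap i j v := \sum_(x : 'I_d) conjc (phi i (x, v)) * phi j (x, v).
Definition interference i j v := conjc (a i) * a j * overlap i j v.
Definition phase i j := conjc (lam i) * lam j.

Lemma Pt_expansion t v :
  (Pt U (superpos phi a) t v)%:C = \sum_i \sum_j interference i j v * phase i j ^+ t.
Proof.
rewrite /Pt rmorph_sum /=.
under eq_bigr do rewrite cmod_sqr iterOp_superpos rmorph_sum big_distrl /=.
under eq_bigr do under eq_bigr do rewrite big_distrr /=.
rewrite exchange_big /=; apply: eq_bigr => i _.
rewrite exchange_big /=; apply: eq_bigr => j _.
rewrite /interference /overlap big_distrr /= big_distrl /=; apply: eq_bigr => x _.
by rewrite /phase !rmorphM rmorphXn /= exprMn; ring.
Qed.

Definition Pinf v := \sum_i \sum_(j | lam i == lam j) interference i j v.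
Definition Posc T v := \sum_i \sum_(j | lam i != lam j)
  interference i j v * (T%:R^-1 * \sum_(t < T) phase i j ^+ t).

Lemma Pbar_expansion T v : (0 < T)%N ->
  Pbar U (superpos phi a) T v = complex.Re (Pinf v) + complex.Re (Posc T v).
Proof.
move=> T_gt0; rewrite -ReD -[LHS]/(complex.Re (Pbar U (superpos phi a) T v)%:C).
congr complex.Re.
rewrite /Pbar rmorphM fmorphV rmorph_nat rmorph_sum /=.
under eq_bigr do rewrite Pt_expansion.
rewrite exchange_big /= big_distrr /= -big_split /=; apply: eq_bigr => i _.
rewrite exchange_big /= big_distrr /= (bigID (fun j => lam i == lam j)) /=.
congr (_ + _); apply: eq_bigr => j lam_ij; last by rewrite -big_distrr /=; ring.
rewrite /phase -(eqP lam_ij) eigenvalue_conjcM.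
under eq_bigr do rewrite expr1n.
rewrite -big_distrr /= sumr_const card_ord mulrCA -mulr_natr mulrC mulrA.
by rewrite mulVf ?mul1r ?pnatr_eq0 -?lt0n.
Qed.

Lemma cmod_phase i j : cmod (phase i j) = 1.
Proof. by rewrite cmodM cmodJ !cmod_eigenvalue mulr1. Qed.

Lemma cmod_phase_sub1 i j : cmod (phase i j - 1) = cmod (lam i - lam j).
Proof.
have -> : phase i j - 1 = conjc (lam i) * - (lam i - lam j).
  by rewrite /phase mulrN mulrBr eigenvalue_conjcM opprB.
by rewrite cmodM cmodJ cmod_eigenvalue mul1r cmodN.
Qed.

Lemma cmod_Posc_le T v : cmod (Posc T v) <=
  2 * \sum_i \sum_(j | lam i != lam j)
        cmod (interference i j v) / (T%:R * cmod (lam i - lam j)).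
Proof.
rewrite big_distrr; apply: le_trans (cmod_sum _ _ _) _; apply: ler_sum => i _.
rewrite big_distrr; apply: le_trans (cmod_sum _ _ _) _; apply: ler_sum => j lam_ij.
have phase_neq1 : phase i j != 1.
  apply/eqP => phase1.
  have : 0 < cmod (lam i - lam j) by rewrite cmod_gt0 // subr_eq0.
  by rewrite -cmod_phase_sub1 phase1 subrr cmod0 ltxx.
have := cmod_mean_geometric_le T (cmod_phase i j) phase_neq1.
rewrite cmod_phase_sub1 cmodM => /(ler_wpM2l (cmod_ge0 (interference i j v))).
by rewrite mulrCA.
Qed.

Lemma Plim_expansion v : Plim U (superpos phi a) v = complex.Re (Pinf v).
Proof.
apply: cvg_lim => //; apply: (@cvg_dist_le_divn _ _ _
  (2 * \sum_i \sum_(j | lam i != lam j)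
         cmod (interference i j v) / cmod (lam i - lam j))) => T T_gt0.
rewrite Pbar_expansion // opprD addrA subrr sub0r normrN.
apply: le_trans (ler_Re_cmod _) _; apply: le_trans (cmod_Posc_le T v) _.
rewrite -mulrA ler_wpM2l // big_distrl; apply: ler_sum => i _.
rewrite big_distrl; apply: ler_sum => j _ /=.
by rewrite invfM mulrA mulrAC.
Qed.

Lemma sum_overlap_le i j : \sum_v cmod (overlap i j v) <= 1.
Proof.
have phi_sqnorm k : \sum_s cmod (phi k s) ^+ 2 = 1.
  apply: complexI; rewrite rmorph_sum rmorph1 /=.
  under eq_bigr do rewrite cmod_sqr.
  by have := phi_orthonormal k k; rewrite eqxx.
apply: le_trans (_ : _ <= \sum_v \sum_(x : 'I_d)
    (cmod (phi i (x, v)) ^+ 2 + cmod (phi j (x, v)) ^+ 2) / 2) _.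
  apply: ler_sum => v _; apply: le_trans (cmod_sum _ _ _) _.
  apply: ler_sum => x _; rewrite cmodM cmodJ.
  have := sqr_ge0 (cmod (phi i (x, v)) - cmod (phi j (x, v))); nra.
rewrite exchange_big pair_big /=.
rewrite (eq_bigr (fun s => (cmod (phi i s) ^+ 2 + cmod (phi j s) ^+ 2) / 2)) //.
  by rewrite -big_distrl big_split /= !phi_sqnorm divff // pnatr_eq0.
by case.
Qed.

Lemma sum_interference_le i j :
  \sum_v cmod (interference i j v) <= cmod (a i) * cmod (a j).
Proof.
under eq_bigr do rewrite /interference !cmodM cmodJ.
rewrite -big_distrr /= -[leRHS]mulr1 ler_wpM2l ?mulr_ge0 ?cmod_ge0 //.
exact: sum_overlap_le.
Qed.

End QuantumWalk.

Theorem mainTheorem8 (R : realType) (d : nat) (V : finType)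
  (U : ('I_d * V)%type -> ('I_d * V)%type -> R[i])
  (phi : ('I_d * V)%type -> ('I_d * V)%type -> R[i])
  (lam : ('I_d * V)%type -> R[i])
  (a : ('I_d * V)%type -> R[i]) (T : nat) :
  qw_unitary U ->
  (forall i j, cdot (phi i) (phi j) = (i == j)%:R) ->
  (forall i s, applyOp U (phi i) s = lam i * phi i s) ->
  sqnorm (superpos phi a) = 1 ->
  (0 < T)%N ->
  tvdist (Pbar U (superpos phi a) T) (Plim U (superpos phi a))
  <= 2 * \sum_(i : ('I_d * V)%type) \sum_(j : ('I_d * V)%type | lam i != lam j)
           cmod (a i) ^+ 2 / (T%:R * cmod (lam i - lam j)).
Proof.
(* The bound is homogeneous of degree 2 in a. *)
move=> U_unitary phi_orthonormal phi_eigen _ T_gt0.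
rewrite /tvdist.
under eq_bigr do rewrite (Pbar_expansion (lam := lam)) //
  (Plim_expansion (lam := lam)) // addrAC subrr add0r.
apply: le_trans.
  apply: ler_sum => v _; apply: le_trans (ler_Re_cmod _) _.
  exact: (cmod_Posc_le a U_unitary phi_orthonormal phi_eigen).
rewrite -big_distrr ler_wpM2l //= exchange_big /=.
under eq_bigr do rewrite exchange_big /=.
apply: le_trans (_ : _ <= \sum_i \sum_(j | lam i != lam j)
  cmod (a i) * cmod (a j) / (T%:R * cmod (lam i - lam j))) _.
  apply: ler_sum => i _; apply: ler_sum => j _.
  rewrite -big_distrl ler_wpM2r ?invr_ge0 ?mulr_ge0 ?cmod_ge0 //.
  exact: sum_interference_le.
apply: (ler_sum_sym_mul (P := fun i j => lam i != lam j) (fun i => cmod (a i))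
  (X := fun i j => (T%:R * cmod (lam i - lam j))^-1)) => i j.
- by rewrite eq_sym.
- by rewrite -opprB cmodN.
- by rewrite invr_ge0 mulr_ge0 ?cmod_ge0.
Qed.
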